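(* If $A\in\mathsf{M}_n(\mathbb{C})$ is $h$-cyclic and nonsingular, then $h$ divides $n$.
   Context: The digraph $\Gamma_A$ of $A=[a_{ij}]\in\mathsf{M}_n(\mathbb{C})$ has vertex set $\{1,\dots,n\}$ and arc set $\{(i,j): a_{ij}\neq 0\}$. $A$ is $h$-cyclic if there is a partition $P=\{V_1,\dots,V_h\}$ of $\{1,\dots,n\}$ into $h$ nonempty parts such that for every arc $(i,j)$ of $\Gamma_A$ there is $\ell\in\{1,\dots,h\}$ with $i\in V_\ell$ and $j\in V_{\ell+1}$, where $V_{h+1}:=V_1$. *)

From mathcomp Require Import all_boot all_order all_algebra.
From mathcomp Require Import complex.
Set Implicit Arguments. Unset Strict Implicit. Unset Printing Implicit Defensive.
Import GRing.Theory.
Local Open Scope ring_scope.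

(* A : 'M[F]_n is h-cyclic: there is a partition {V_0,...,V_(h-1)} of
   {0,...,n-1} into h nonempty parts (encoded by the labelling
   lab : 'I_n -> 'I_h, V_l = lab^-1(l), nonempty parts = surjectivity)
   such that every arc (i,j) of the digraph of A (A i j != 0) goes from
   some V_l to V_(l+1 mod h). *)
Definition h_cyclic (F : nzRingType) (n h : nat) (A : 'M[F]_n) : Prop :=
  exists lab : 'I_n -> 'I_h,
    (forall l : 'I_h, exists i : 'I_n, lab i = l) /\
    (forall i j : 'I_n, A i j != 0 -> (nat_of_ord (lab j) = (lab i).+1 %% h)%N).

From mathcomp Require Import all_boot all_order all_algebra perm.
From mathcomp Require Import complex.

Set Implicit Arguments.
Unset Strict Implicit.
Unset Printing Implicit Defensive.

(* A nonsingular matrix has a nonzero term in the Leibniz expansion of its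
   determinant, i.e. a permutation s with every arc (i, s i) in its digraph.
   An h-cyclic labelling makes s shift the labels cyclically, so s maps each
   part V_l bijectively onto V_(l+1): all h parts have the same size and h
   divides n. *)

Section CyclicShift.

Variables (T : finType) (h : nat) (lab : T -> 'I_h) (s : {perm T}).
Hypothesis lab_shift : forall x, lab (s x) = (lab x).+1 %% h :> nat.

Let part k := [set x | lab x == k %[mod h]].

Lemma card_part_succ k : #|part k.+1| = #|part k|.
Proof.
rewrite -(card_preimset _ (@perm_inj _ s)); apply: eq_card => x.
by rewrite !inE lab_shift modn_mod -(addn1 k) -(addn1 (lab x)) eqn_modDr.
Qed.

Lemma card_part k : #|part k| = #|part 0|.
Proof. by elim: k => // k IHk; rewrite card_part_succ. Qed.

Lemma dvdn_card_cyclic_shift : (h %| #|T|)%N.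
Proof.
rewrite -sum1_card (partition_big lab predT) //=.
rewrite (eq_bigr (fun=> #|part 0|)) ?sum_nat_const ?card_ord ?dvdn_mulr // => l _.
rewrite -(card_part l) -sum1_card; apply: eq_bigl => x.
by rewrite inE !modn_small.
Qed.

End CyclicShift.

Local Open Scope ring_scope.
Import GRing.Theory.

Lemma unitmx_perm_support (R : comUnitRingType) n (A : 'M[R]_n) :
  A \in unitmx -> exists s : 'S_n, forall i, A i (s i) != 0.
Proof.
rewrite unitmxE; case: (pickP [pred s : 'S_n | [forall i, A i (s i) != 0]]).
  by move=> s /forallP nzAs _; exists s.
move=> no_support; suff -> : \det A = 0 by rewrite unitr0.
apply: big1 => s _; case/forallPn: (negbT (no_support s)) => i.
by rewrite negbK => /eqP Ais0; rewrite (bigD1 i) //= Ais0 mul0r mulr0.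
Qed.

Theorem corollary3p2 (R : rcfType) (n h : nat) (A : 'M[R[i]]_n) :
  h_cyclic h A -> A \in unitmx -> (h %| n)%N.
Proof.
move=> [lab [_ lab_arc]] /unitmx_perm_support[s nzAs].
have lab_shift x : nat_of_ord (lab (s x)) = ((lab x).+1 %% h)%N by exact: lab_arc.
have := dvdn_card_cyclic_shift lab_shift.
by rewrite card_ord.
Qed.
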